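(* Let $\varphi=\forall x_1\exists y_1\cdots\forall x_k\exists y_k\,P$ be a positive Horn sentence over a finite relational signature $\sigma$ with $P$ a conjunction of equality-free atomic $\sigma$-formulas, and let $\psi=\forall w_1\exists z_1\cdots\forall w_l\exists z_l\,Q(w_1,z_1,\dots,w_l,z_l)$ be a positive Horn sentence over $\sigma$ with $Q$ a conjunction of atoms. The following are equivalent: (i) Existential has a winning strategy in the $\psi$-rel-game on $\mathcal{T}_\varphi(C_\omega)$; (ii) Existential has a winning strategy in the $\psi$-rel-cc-game on $\mathcal{T}_\varphi(C_\omega)$; (iii) Existential has a winning strategy in the $\psi$-rel-cc-game on $\mathcal{T}_\varphi(C_l)$; (iv) Existential has a winning strategy in the $\psi$-rel-cc-game on $\mathcal{T}^{l^{l+2}}_\varphi(C_l)$.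
   Context: Let $f_1,\dots,f_k$ be new function symbols, $f_i$ of arity $i$, and $\mathrm{Sk}(\varphi)=\forall x_1\cdots\forall x_k\,P(x_1,f_1(x_1),\dots,x_k,f_k(x_1,\dots,x_k))$. For $\alpha$ a positive integer or $\omega$, $C_\alpha=\{c_1,\dots,c_\alpha\}$ (resp. $\{c_1,c_2,\dots\}$) are new constants, $T_\varphi(C_\alpha)$ is the set of closed terms built from $C_\alpha$ with the $f_i$, and the rank of a term is its maximal nesting depth of function symbols. $\mathcal{T}_\varphi(C_\alpha)$ is the $\sigma$-structure on $T_\varphi(C_\alpha)$ in which $R(t_1,\dots,t_p)$ holds iff it is obtained from an atom of the matrix of $\mathrm{Sk}(\varphi)$ by substituting terms of $T_\varphi(C_\alpha)$ for $x_1,\dots,x_k$; $\mathcal{T}^m_\varphi(C_\alpha)$ is its induced substructure on terms of rank $\leq m$. For a structure $\mathcal{M}$ equal to $\mathcal{T}_\varphi(C_\alpha)$ or $\mathcal{T}^m_\varphi(C_\alpha)$: the $\psi$-rel-game on $\mathcal{M}$ is played in rounds $i=1,\dots,l$, in round $i$ Universal chooses a value for $w_i$ from $C_\alpha$ and then Existential chooses a value for $z_i$ from the domain of $\mathcal{M}$; Existential wins iff $\mathcal{M}\models Q$ under the resulting assignment. The $\psi$-rel-cc-game is the same, except that in round $i$ Existential must choose a term in which only constants already chosen by Universal in rounds $1,\dots,i$ occur. A winning strategy for Existential is one that wins against every play of Universal. *)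

From Stdlib Require List.
From mathcomp Require Import all_boot.
Set Implicit Arguments. Unset Strict Implicit. Unset Printing Implicit Defensive.

(* Closed terms over constants c_0, c_1, ... (paper's c_1, c_2, ...) and the
   Skolem function symbols f_i (i = 1..k, f_i of arity i).
   [Fn i ts] stands for f_i(ts). *)
Inductive term : Type :=
| Cst of nat
| Fn of nat & seq term.

(* C_alpha: [Some n] = {c_0,...,c_{n-1}} (paper's C_n), [None] = C_omega. *)
Definition inC (alpha : option nat) (c : nat) : bool :=
  if alpha is Some n then c < n else true.

Fixpoint wf_term (alpha : option nat) (k : nat) (t : term) : bool :=
  match t with
  | Cst c => inC alpha c
  | Fn i ts => [&& 0 < i <= k, size ts == i & all (wf_term alpha k) ts]
  end.

Fixpoint rank (t : term) : nat :=
  match t with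
  | Cst _ => 0
  | Fn _ ts => (foldr maxn 0 (map rank ts)).+1
  end.

Fixpoint consts (t : term) : seq nat :=
  match t with
  | Cst c => [:: c]
  | Fn _ ts => flatten (map consts ts)
  end.

(* Variables of phi: x_{i+1} = PX i, y_{i+1} = PY i, for i : 'I_k. *)
Inductive pvar (k : nat) : Type :=
| PX of 'I_k
| PY of 'I_k.

Definition patom (S : finType) (ar : S -> nat) (k : nat) : Type :=
  {R : S & (ar R).-tuple (pvar k)}.

(* Substitution in the matrix of Sk(phi): x_{i+1} |-> s i and
   y_{i+1} |-> f_{i+1}(s 0, ..., s i). *)
Definition skinterp (k : nat) (s : nat -> term) (v : pvar k) : term :=
  match v with
  | PX i => s i
  | PY i => Fn i.+1 (mkseq s i.+1)
  end.

(* Domain of T_phi(C_alpha) (m = None) or T^m_phi(C_alpha) (m = Some m). *)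
Definition Tdom (k : nat) (alpha : option nat) (m : option nat) (t : term) : bool :=
  wf_term alpha k t && (if m is Some r then rank t <= r else true).

(* Relation R of T_phi(C_alpha) (resp. its induced substructure on Tdom):
   ts is obtained from an atom of the matrix of Sk(phi) by substituting terms of
   T_phi(C_alpha) for x_1..x_k. *)
Definition Trel (S : finType) (ar : S -> nat) (k : nat) (P : seq (patom ar k))
    (alpha m : option nat) (R : S) (ts : seq term) : Prop :=
  all (Tdom k alpha m) ts /\
  exists a : patom ar k, List.In a P /\ projT1 a = R /\
    exists s : nat -> term, (forall j, j < k -> wf_term alpha k (s j)) /\
      ts = map (skinterp s) (tval (projT2 a)).

(* Variables of psi: w_{j+1} = QW j, z_{j+1} = QZ j. *)
Inductive qvar (l : nat) : Type :=
| QW of 'I_l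
| QZ of 'I_l.

Inductive qatom (S : finType) (ar : S -> nat) (l : nat) : Type :=
| QRel (R : S) of (ar R).-tuple (qvar l)
| QEq of qvar l & qvar l.

Definition satQ (S : finType) (ar : S -> nat) (k : nat) (P : seq (patom ar k))
    (alpha m : option nat) (l : nat) (Q : seq (qatom ar l)) (e : qvar l -> term) : Prop :=
  forall q, List.In q Q ->
    match q with
    | QRel R args => Trel P alpha m R (map e (tval args))
    | QEq u v => e u = e v
    end.

(* A strategy for Existential maps the sequence of Universal's moves so far
   (w_1..w_j, as constant indices) to Existential's move z_j.
   It is winning in the psi-rel-game (cc = false) or psi-rel-cc-game (cc = true)
   on the structure (alpha, m) if, against every play w of Universal with values
   in C_alpha, all moves are legal (in the domain, and for cc only using
   constants already played by Universal) and Q holds. *)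
Definition winning (S : finType) (ar : S -> nat) (k : nat) (P : seq (patom ar k))
    (alpha m : option nat) (l : nat) (Q : seq (qatom ar l)) (cc : bool)
    (str : seq nat -> term) : Prop :=
  forall w : nat -> nat, (forall j, j < l -> inC alpha (w j)) ->
    let z := fun j : nat => str (mkseq w j.+1) in
    (forall j, j < l ->
       Tdom k alpha m (z j) &&
       (cc ==> all (fun c => c \in mkseq w j.+1) (consts (z j)))) /\
    satQ P alpha m Q (fun v => match v with QW j => Cst (w j) | QZ j => z j end).

Definition ExistentialWins (S : finType) (ar : S -> nat) (k : nat) (P : seq (patom ar k))
    (alpha m : option nat) (l : nat) (Q : seq (qatom ar l)) (cc : bool) : Prop :=
  exists str, winning P alpha m Q cc str.

From HB Require Import structures.
From mathcomp Require Import all_boot.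
Set Implicit Arguments. Unset Strict Implicit. Unset Printing Implicit Defensive.

(* (ii)=>(i) and (iv)=>(iii) only forget constraints. Every other implication
   transports a winning strategy along a map H on terms: a relation instance of
   T_phi is an atom of P with terms substituted for x_1..x_k, and the Skolem terms
   f_i(...) of the atom are among the terms played, so any H that commutes with the
   function symbols on the played terms maps winning plays to winning plays.
   - (ii)=>(iii): a cc-strategy only uses constants Universal has played.
   - (iii)=>(ii): Existential pretends Universal's j-th move was c_j, which lies
     in C_l, and renames the constants of the reply back.
   - (i)=>(ii): Existential answers the rel-strategy's reply to a play of fresh
     constants, each larger than every constant that strategy has produced so far,
     and translates the reply back; constants the play never introduced are
     replaced by Universal's first move.
   - (iii)=>(iv): the replies of a strategy on C_l form a set L of at most
     l^(l+1) terms. Replacing every compound subterm outside L by one of its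
     constants keeps the played terms, and bounds the rank by |L|, because the
     compound subterms kept along a branch are distinct members of L. *)

Lemma In_mem (T : eqType) (x : T) s : List.In x s <-> x \in s.
Proof.
elim: s => //= y s IH; rewrite in_cons.
by split=> [[->|/IH ->]|/orP[/eqP->|/IH]]; rewrite ?eqxx ?orbT; auto.
Qed.

Lemma sub_count_lt (T : eqType) (p q : pred T) s x : subpred p q ->
  x \in s -> q x -> ~~ p x -> count p s < count q s.
Proof.
move=> pq; elim: s => //= y s IH; rewrite in_cons => /orP[/eqP<- qx px|sx qx px].
  by rewrite qx (negbTE px) add1n ltnS sub_count.
by rewrite -addnS leq_add ?IH //; case py: (p y); rewrite ?(pq _ py).
Qed.

Lemma take_mkseq (T : Type) (f : nat -> T) n m : n <= m -> take n (mkseq f m) = mkseq f n.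
Proof. by move=> le_nm; rewrite /mkseq -map_take take_iota (minn_idPl le_nm). Qed.

Lemma mem_mkseq_f (T : eqType) (f : nat -> T) n i : i < n -> f i \in mkseq f n.
Proof. by move=> lt_in; apply: map_f; rewrite mem_iota. Qed.

Lemma in_mkseqP (T : eqType) (f : nat -> T) n x :
  reflect (exists2 i, i < n & x = f i) (x \in mkseq f n).
Proof.
apply: (iffP mapP) => [[i]|[i lt_in ->]]; last by exists i; rewrite ?mem_iota.
by rewrite mem_iota => /andP[_ lt_in] ->; exists i.
Qed.

Lemma index_mkseq (T : eqType) (f : nat -> T) n i :
  injective f -> i < n -> index (f i) (mkseq f n) = i.
Proof.
move=> inj_f lt_in.
by rewrite -{1}(nth_mkseq (f 0) f lt_in) index_uniq ?size_mkseq ?mkseq_uniq.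
Qed.

Lemma mem_nth_head (s : seq nat) i : 0 < size s -> nth (head 0 s) s i \in s.
Proof.
case: s => // x s _; have [lt_is|le_si] := ltnP i (size (x :: s)); first exact: mem_nth.
by rewrite nth_default ?mem_head.
Qed.

Fixpoint term_ind_In (Pr : term -> Prop) (Hc : forall c, Pr (Cst c))
  (Hf : forall i ts, (forall t, List.In t ts -> Pr t) -> Pr (Fn i ts)) (t : term) : Pr t :=
  match t with
  | Cst c => Hc c
  | Fn i ts => Hf i ts
      ((fix F (us : seq term) : forall u, List.In u us -> Pr u :=
          match us with
          | [::] => fun u H => False_ind _ H
          | a :: us' => fun u H => match H with
                | or_introl E => eq_ind a Pr (term_ind_In Hc Hf a) u E
                | or_intror H' => F us' u H'
                end
          end) ts)
  end.

Fixpoint tree_of_term (t : term) : GenTree.tree nat :=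
  match t with Cst c => GenTree.Leaf c | Fn i ts => GenTree.Node i (map tree_of_term ts) end.

Fixpoint term_of_tree (t : GenTree.tree nat) : term :=
  match t with GenTree.Leaf c => Cst c | GenTree.Node i ts => Fn i (map term_of_tree ts) end.

Lemma tree_of_termK : cancel tree_of_term term_of_tree.
Proof.
elim/term_ind_In => // i ts IH /=; congr Fn; rewrite -map_comp.
elim: ts IH => //= u us IHus IH.
by rewrite IH ?IHus //; [move=> t Ht; apply: IH; right | left].
Qed.

HB.instance Definition _ := Equality.copy term (can_type tree_of_termK).

Lemma term_ind_mem (Pr : term -> Prop) : (forall c, Pr (Cst c)) ->
  (forall i ts, {in ts, forall t, Pr t} -> Pr (Fn i ts)) -> forall t, Pr t.
Proof. by move=> Hc Hf; elim/term_ind_In => // i ts IH; apply: Hf => t /In_mem /IH. Qed.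

Fixpoint csubst (g : nat -> nat) (t : term) : term :=
  match t with Cst c => Cst (g c) | Fn i ts => Fn i (map (csubst g) ts) end.

Lemma consts_csubst g t : consts (csubst g t) = map g (consts t).
Proof.
elim/term_ind_mem: t => // i ts IH /=.
by rewrite map_flatten -!map_comp; congr flatten; apply/eq_in_map => u /IH.
Qed.

Lemma eq_in_csubst g1 g2 t : {in consts t, g1 =1 g2} -> csubst g1 t = csubst g2 t.
Proof.
elim/term_ind_mem: t => [c /= eq_g|i ts IH /= eq_g]; first by rewrite eq_g ?mem_head.
congr Fn; apply/eq_in_map => u tsu; apply: IH => // c cu.
by apply: eq_g; apply/flatten_mapP; exists u.
Qed.

Lemma csubst_id t : csubst id t = t.
Proof.
elim/term_ind_mem: t => // i ts IH /=.
by congr Fn; rewrite -[RHS]map_id; apply/eq_in_map.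
Qed.

Lemma wf_term_consts alpha k t : wf_term alpha k t -> {in consts t, forall c, inC alpha c}.
Proof.
elim/term_ind_mem: t => [d /= ? c|i ts IH /=]; first by rewrite mem_seq1 => /eqP->.
by case/and3P=> _ _ /allP wf_ts c /flatten_mapP[u tsu cu]; exact: IH (wf_ts u tsu) c cu.
Qed.

Lemma wf_term_consts_neq0 alpha k t : wf_term alpha k t -> consts t != [::].
Proof.
elim/term_ind_mem: t => // i [|u us] IH /and3P[/andP[i_gt0 _] /eqP size_ts /allP wf_ts].
  by rewrite -size_ts in i_gt0.
by rewrite /=; have := IH u (mem_head _ _) (wf_ts u (mem_head _ _)); case: (consts u).
Qed.

Lemma wf_csubst alpha beta k g t : wf_term alpha k t ->
  {in consts t, forall c, inC beta (g c)} -> wf_term beta k (csubst g t).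
Proof.
elim/term_ind_mem: t => [c _ /= -> //|i ts IH /=]; first exact: mem_head.
case/and3P=> -> size_ts /allP wf_ts g_beta; rewrite size_map size_ts /=.
apply/allP => _ /mapP[u tsu ->]; apply: IH (wf_ts u tsu) _ => // c cu.
by apply: g_beta; apply/flatten_mapP; exists u.
Qed.

Lemma rank_Fn i ts : rank (Fn i ts) = (\max_(u <- ts) rank u).+1.
Proof. by rewrite /= foldrE big_map. Qed.

Lemma rank_arg i ts u : u \in ts -> rank u < rank (Fn i ts).
Proof. by move=> tsu; rewrite rank_Fn ltnS (leq_bigmax_seq u). Qed.

Fixpoint subterm (z t : term) : bool :=
  (z == t) || (if t is Fn _ ts then has (subterm z) ts else false).

Lemma rank_subterm z t : subterm z t -> rank z <= rank t.
Proof.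
elim/term_ind_mem: t => [c|i ts IH] /=; first by rewrite orbF => /eqP->.
case/orP=> [/eqP-> //|/hasP[u tsu /(IH u tsu) le_zu]].
exact: leq_trans le_zu (ltnW (rank_arg i tsu)).
Qed.

Section Collapse.
Variable L : seq term.

Fixpoint collapse (t : term) : term :=
  match t with
  | Cst c => Cst c
  | Fn i ts =>
      if Fn i ts \in L then Fn i (map collapse ts) else Cst (head 0 (consts (Fn i ts)))
  end.

Lemma rank_collapse t : rank (collapse t) <= count (subterm^~ t) L.
Proof.
elim/term_ind_mem: t => // i ts IH /=; case: ifP => // tL.
have t_subterm : subterm (Fn i ts) (Fn i ts) by rewrite /= eqxx.
have count_gt0 : 0 < count (subterm^~ (Fn i ts)) L.
  by rewrite -has_count; apply/hasP; exists (Fn i ts).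
rewrite rank_Fn big_map -(prednK count_gt0) ltnS; apply/bigmax_leqP_seq => u tsu _.
rewrite -ltnS prednK //; apply: leq_ltn_trans (IH u tsu) _.
apply: (sub_count_lt (x := Fn i ts)) => //=.
- by move=> z zu; rewrite /= (introT hasP) ?orbT //; exists u.
- by apply/negP => /rank_subterm; rewrite leqNgt rank_arg.
Qed.

Lemma wf_collapse alpha k t : wf_term alpha k t -> wf_term alpha k (collapse t).
Proof.
elim/term_ind_mem: t => // i ts IH wf_t /=; case: ifP => _.
  case/and3P: wf_t => /= -> size_ts /allP wf_ts; rewrite size_map size_ts /=.
  by apply/allP => _ /mapP[u tsu ->]; apply/IH/wf_ts.
move: (wf_term_consts wf_t) (wf_term_consts_neq0 wf_t) => /=.
by case: (flatten _) => //= c cs inC_cs _; apply: inC_cs; rewrite mem_head.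
Qed.

Lemma consts_collapse alpha k t :
  wf_term alpha k t -> {subset consts (collapse t) <= consts t}.
Proof.
elim/term_ind_mem: t => [c _ d //|i ts IH wf_t c]; rewrite [collapse _]/=; case: ifP => _.
  case/and3P: wf_t => _ _ /allP wf_ts /flatten_mapP[_ /mapP[u tsu ->] cu].
  by apply/flatten_mapP; exists u => //; exact: IH (wf_ts u tsu) c cu.
move: (wf_term_consts_neq0 wf_t) => /=.
by case: (flatten _) => //= d ds _; rewrite mem_seq1 => /eqP->; rewrite mem_head.
Qed.
End Collapse.

Section FreshMoves.
Variable str : seq nat -> term.

Definition fresh (s : seq nat) : nat :=
  (\max_(c <- s ++ flatten [seq consts (str (take i.+1 s)) | i <- iota 0 (size s)]) c).+1.

Fixpoint fresh_moves n : seq nat :=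
  if n is n'.+1 then rcons (fresh_moves n') (fresh (fresh_moves n')) else [::].

Definition fresh_move i := fresh (fresh_moves i).

Lemma fresh_movesE n : fresh_moves n = mkseq fresh_move n.
Proof. by elim: n => //= n IH; rewrite mkseqS -IH. Qed.

Lemma fresh_gt s c :
  c \in s ++ flatten [seq consts (str (take i.+1 s)) | i <- iota 0 (size s)] -> c < fresh s.
Proof. by move=> cs; rewrite ltnS (leq_bigmax_seq c). Qed.

Lemma fresh_move_gt i j : i < j -> fresh_move i < fresh_move j.
Proof.
by move=> ij; rewrite {2}/fresh_move fresh_movesE fresh_gt // mem_cat mem_mkseq_f.
Qed.

Lemma fresh_move_inj : injective fresh_move.
Proof. by move=> i j eq_ij; case: (ltngtP i j) => // /fresh_move_gt; rewrite eq_ij ltnn. Qed.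

Lemma consts_lt_fresh_move i j c :
  i < j -> c \in consts (str (mkseq fresh_move i.+1)) -> c < fresh_move j.
Proof.
move=> ij cz; rewrite /fresh_move fresh_movesE fresh_gt // mem_cat; apply/orP; right.
apply/flatten_mapP; exists i; first by rewrite size_mkseq mem_iota.
by rewrite take_mkseq.
Qed.

(* A constant that is none of the first (size p) fresh moves is sent to the first move
   of p (the default of nth). *)
Definition unfresh (p : seq nat) (c : nat) : nat :=
  nth (head 0 p) p (index c (mkseq fresh_move (size p))).

Lemma unfresh_fresh_move w n i : i < n -> unfresh (mkseq w n) (fresh_move i) = w i.
Proof.
by move=> lt_in; rewrite /unfresh size_mkseq index_mkseq ?nth_mkseq //; exact: fresh_move_inj.
Qed.

Lemma unfresh_prefix w j n c : j < n -> c \in consts (str (mkseq fresh_move j.+1)) ->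
  unfresh (mkseq w j.+1) c = unfresh (mkseq w n) c.
Proof.
move=> jn cz; have [/in_mkseqP[i ij ->]|c_new] := boolP (c \in mkseq fresh_move j.+1).
  by rewrite !unfresh_fresh_move // (leq_trans ij).
have c_out : c \notin mkseq fresh_move n.
  apply/in_mkseqP => -[t tn ct]; move: c_new; rewrite ct.
  have [tj|jt] := leqP t j; first by rewrite mem_mkseq_f.
  by have := consts_lt_fresh_move jt cz; rewrite ct ltnn.
rewrite /unfresh !size_mkseq !memNindex // !size_mkseq !nth_default ?size_mkseq //.
by case: n jn {c_out}.
Qed.
End FreshMoves.

Section Games.
Variables (S : finType) (ar : S -> nat) (k : nat) (P : seq (patom ar k)).
Variables (l : nat) (Q : seq (qatom ar l)).

Definition play (str : seq nat -> term) (w : nat -> nat) (v : qvar l) : term :=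
  match v with QW j => Cst (w j) | QZ j => str (mkseq w j.+1) end.

(* The Skolem terms f_i(...) of an atom are among the values of e', so H only needs to
   commute with the function symbols there. *)
Lemma satQ_map alpha' m' alpha m (H : term -> term) (e' e : qvar l -> term) :
  satQ P alpha' m' Q e' ->
  (forall t, wf_term alpha' k t -> wf_term alpha k (H t)) ->
  (forall v i us, e' v = Fn i us -> H (Fn i us) = Fn i (map H us)) ->
  (forall v, Tdom k alpha m (e v)) ->
  e =1 H \o e' ->
  satQ P alpha m Q e.
Proof.
move=> sat' wf_H H_Fn dom_e eE q /sat'; case: q => [R args|u v]; last by rewrite !eE /= => ->.
case=> _ [a [Pa [Ra [s [wf_s ts_eq]]]]].
split; first by elim: (tval args) => //= v vs ->; rewrite dom_e.
exists a; split=> //; split=> //; exists (H \o s); split=> [j /wf_s/wf_H //|].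
rewrite (eq_map eE) map_comp ts_eq -map_comp; apply: List.map_ext_in => -[j|j] //= jP.
have /List.in_map_iff[v [e'v _]] : List.In (Fn j.+1 (mkseq s j.+1)) (map e' (tval args)).
  by rewrite ts_eq; apply: (List.in_map (skinterp s) _ _ jP).
by rewrite (H_Fn v _ _ e'v) /mkseq -map_comp.
Qed.

Lemma Tdom_Cst alpha m c : Tdom k alpha m (Cst c) = inC alpha c.
Proof. by case: m => [r|]; rewrite /Tdom /= ?andbT. Qed.

Lemma satQ_play_map alpha' m' alpha m (H : term -> term) str' w' str w :
  satQ P alpha' m' Q (play str' w') ->
  (forall t, wf_term alpha' k t -> wf_term alpha k (H t)) ->
  (forall j i us, j < l -> str' (mkseq w' j.+1) = Fn i us -> H (Fn i us) = Fn i (map H us)) ->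
  (forall j, j < l -> inC alpha (w j) /\ Tdom k alpha m (str (mkseq w j.+1))) ->
  (forall j, j < l -> Cst (w j) = H (Cst (w' j))) ->
  (forall j, j < l -> str (mkseq w j.+1) = H (str' (mkseq w' j.+1))) ->
  satQ P alpha m Q (play str w).
Proof.
move=> sat' wf_H H_Fn dom_wz Hw Hz; apply: (satQ_map sat' wf_H).
- by case=> j i us //=; apply: H_Fn.
- by case=> j /=; have [? ?] := dom_wz j (ltn_ord j); rewrite ?Tdom_Cst.
- by case=> j /=; [apply: Hw | apply: Hz].
Qed.

Lemma wins_cc_rel alpha m :
  ExistentialWins P alpha m Q true -> ExistentialWins P alpha m Q false.
Proof.
by case=> str win; exists str => w /win[legal sat]; split=> // j /legal /andP[-> _].
Qed.

Lemma wins_drop_rank alpha r cc :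
  ExistentialWins P alpha (Some r) Q cc -> ExistentialWins P alpha None Q cc.
Proof.
case=> str win; exists str => w w_in; have [legal sat] := win w w_in.
have dom_z j : j < l -> Tdom k alpha None (str (mkseq w j.+1)).
  by move=> /legal /andP[/andP[wf_z _] _]; rewrite /Tdom wf_z.
split=> [j jl|]; first by have /andP[_ ->] := legal j jl; rewrite dom_z.
apply: (satQ_play_map (H := id) sat) => // [j i us _ _|j jl]; first by rewrite map_id.
by split; [exact: w_in | exact: dom_z].
Qed.

Lemma wins_cc_restrict : 0 < l ->
  ExistentialWins P None None Q true -> ExistentialWins P (Some l) None Q true.
Proof.
move=> l_gt0 [str win]; exists str => w w_lt; have [legal sat] := win w (fun _ _ => isT).
have consts_lt j c : j < l -> c \in consts (str (mkseq w j.+1)) -> c < l.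
  move=> jl cz; have /andP[_ /allP/(_ c cz)/in_mkseqP[i ij ->]] := legal j jl.
  exact: w_lt (leq_trans ij jl).
(* The played terms already live in C_l; the clamp only moves the witnesses of the
   relation instances into C_l. *)
pose clamp c := if c < l then c else 0.
have wf_clamp t : wf_term None k t -> wf_term (Some l) k (csubst clamp t).
  by move=> wf_t; apply: wf_csubst wf_t _ => c _; rewrite /clamp /=; case: ifP.
have clamp_z j : j < l -> str (mkseq w j.+1) = csubst clamp (str (mkseq w j.+1)).
  move=> jl; rewrite -[LHS]csubst_id; apply: eq_in_csubst => c /(consts_lt j c jl) cl.
  by rewrite /clamp cl.
have dom_z j : j < l -> Tdom k (Some l) None (str (mkseq w j.+1)).
  by move=> jl; have /andP[/andP[wf_z _] _] := legal j jl; rewrite /Tdom clamp_z // wf_clamp.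
split=> [j jl|]; first by have /andP[_ ->] := legal j jl; rewrite dom_z.
apply: (satQ_play_map (H := csubst clamp) sat) => // [j jl|j jl].
  by split; [exact: w_lt | exact: dom_z].
by rewrite /= /clamp ifT //; exact: w_lt.
Qed.

Lemma wins_cc_extend :
  ExistentialWins P (Some l) None Q true -> ExistentialWins P None None Q true.
Proof.
case=> str win; pose str_omega p := csubst (nth 0 p) (str (iota 0 (size p))).
exists str_omega => w _; have [legal sat] := win id (fun j jl => jl).
have mkseq_id n : mkseq id n = iota 0 n by rewrite /mkseq map_id.
have consts_lt j c : j < l -> c \in consts (str (iota 0 j.+1)) -> c < j.+1.
  move=> jl cz; move: (legal j jl); rewrite mkseq_id => /andP[_ /allP/(_ c cz)].
  by rewrite mem_iota.
have wf_str j : j < l -> wf_term (Some l) k (str (iota 0 j.+1)).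
  by move=> jl; move: (legal j jl); rewrite mkseq_id => /andP[/andP[]].
have z_eq j : j < l -> str_omega (mkseq w j.+1) = csubst w (str (iota 0 j.+1)).
  move=> jl; rewrite /str_omega size_mkseq; apply: eq_in_csubst => c /(consts_lt j c jl).
  exact: nth_mkseq.
have wf_z t : wf_term (Some l) k t -> wf_term None k (csubst w t).
  by move=> wf_t; apply: wf_csubst wf_t _.
split=> [j jl|].
  rewrite z_eq // /Tdom wf_z ?wf_str //=.
  rewrite consts_csubst; apply/allP => _ /mapP[c cz ->].
  exact/mem_mkseq_f/(consts_lt j c jl cz).
apply: (satQ_play_map (H := csubst w) sat) => // [j jl|j jl].
- by rewrite z_eq // /Tdom wf_z ?wf_str.
- by rewrite mkseq_id z_eq.
Qed.

Lemma wins_rel_cc :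
  ExistentialWins P None None Q false -> ExistentialWins P None None Q true.
Proof.
case=> str win.
pose str_cc p := csubst (unfresh str p) (str (mkseq (fresh_move str) (size p))).
exists str_cc => w _; have [legal sat] := win (fresh_move str) (fun _ _ => isT).
have wf_z j : j < l -> wf_term None k (str_cc (mkseq w j.+1)).
  move=> jl; have /andP[/andP[wf_str _] _] := legal j jl.
  by rewrite /str_cc size_mkseq; apply: wf_csubst wf_str _.
split=> [j jl|].
  rewrite /Tdom wf_z //= consts_csubst; apply/allP => _ /mapP[c _ ->].
  by apply: mem_nth_head; rewrite size_mkseq.
apply: (satQ_play_map (H := csubst (unfresh str (mkseq w l))) sat)
  => // [t wf_t|j jl|j jl|j jl].
- by apply: wf_csubst wf_t _.
- by split=> //; rewrite /Tdom wf_z.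
- by rewrite /= unfresh_fresh_move.
- by rewrite /str_cc size_mkseq; apply: eq_in_csubst => c; apply: unfresh_prefix.
Qed.

Definition answers (str : seq nat -> term) : seq term :=
  [seq str (take n.+1 [seq val (f i) | i <- enum 'I_l])
  | f : {ffun 'I_l -> 'I_l} <- enum {ffun 'I_l -> 'I_l}, n : nat <- iota 0 l].

Lemma size_answers str : size (answers str) = l ^ l.+1.
Proof. by rewrite size_allpairs -cardE card_ffun !card_ord size_iota expnSr. Qed.

Lemma mem_answers str w j : (forall i, i < l -> inC (Some l) (w i)) -> j < l ->
  str (mkseq w j.+1) \in answers str.
Proof.
move=> w_lt jl; pose f := [ffun i : 'I_l => Ordinal (w_lt i (ltn_ord i))].
have -> : mkseq w j.+1 = take j.+1 [seq val (f i) | i <- enum 'I_l].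
  rewrite -(take_mkseq w jl) /mkseq -val_enum_ord -map_comp.
  by congr take; apply: eq_map => i; rewrite /= ffunE.
by apply: (allpairs_f (fun f n => str (take n.+1 _))); rewrite ?mem_enum ?mem_iota.
Qed.

Lemma wins_cc_bound_rank : 0 < l ->
  ExistentialWins P (Some l) None Q true ->
  ExistentialWins P (Some l) (Some (l ^ (l + 2))) Q true.
Proof.
move=> l_gt0 [str win]; pose L := answers str; pose str_bounded p := collapse L (str p).
exists str_bounded => w w_lt; have [legal sat] := win w w_lt.
have rank_le t : rank (collapse L t) <= l ^ (l + 2).
  apply: leq_trans (rank_collapse L t) (leq_trans (count_size _ _) _).
  by rewrite size_answers addn2 leq_pexp2l.
have dom_z j : j < l -> Tdom k (Some l) (Some (l ^ (l + 2))) (str_bounded (mkseq w j.+1)).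
  move=> jl; have /andP[/andP[wf_z _] _] := legal j jl.
  by rewrite /Tdom /str_bounded wf_collapse ?rank_le.
split=> [j jl|].
  have /andP[/andP[wf_z _] /allP consts_z] := legal j jl.
  by rewrite dom_z //=; apply/allP => c /(consts_collapse wf_z)/consts_z.
apply: (satQ_play_map (H := collapse L) sat) => // [t|j i us jl z_eq|j jl].
- exact: wf_collapse.
- by rewrite /= -z_eq mem_answers.
- by split; [exact: w_lt | exact: dom_z].
Qed.

End Games.

Theorem mainTheorem14 (S : finType) (ar : S -> nat) (k : nat)
    (P : seq (patom ar k)) (l : nat) (Q : seq (qatom ar l)) (hl : 0 < l) :
  [/\ (ExistentialWins P None None Q false <-> ExistentialWins P None None Q true),
      (ExistentialWins P None None Q true <-> ExistentialWins P (Some l) None Q true)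
    & (ExistentialWins P (Some l) None Q true <->
       ExistentialWins P (Some l) (Some (l ^ (l + 2))) Q true)].
Proof.
split; split.
- exact: wins_rel_cc.
- exact: wins_cc_rel.
- exact: wins_cc_restrict.
- exact: wins_cc_extend.
- exact: wins_cc_bound_rank.
- exact: wins_drop_rank.
Qed.
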